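(* Let $\mathcal{L}$ be differentiable and let (A4)–(A5) (see context) hold with some $q>1$. Fix $\theta\in\mathbb{R}^d$ and $p\in(0,1)$, let $\widetilde G(\theta)\sim\mathcal{D}_{\mathcal I}(\theta)$ be an uncorrupted gradient sample, $\tau_\theta=Q_p(\|\widetilde G(\theta)\|)$, $\alpha_\theta=\min(1,\tau_\theta/\|\widetilde G(\theta)\|)$ and $\overline\alpha_\theta=\mathbb{E}[\alpha_\theta\mid\theta]$. Then $$\big\|\mathbb{E}[\alpha_\theta\widetilde G(\theta)]-\overline\alpha_\theta\nabla\mathcal{L}(\theta)\big\|\le(1-p)^{1-1/q}\big(A_q\|\theta-\theta^\star\|+B_q\big),$$ $$\tau_\theta\le\|\nabla\mathcal{L}(\theta)\|+Q_p(\|\varepsilon_\theta\|)\le\|\nabla\mathcal{L}(\theta)\|+(1-p)^{-1/q}\big(A_q\|\theta-\theta^\star\|+B_q\big).$$ If moreover $q\ge2$, then $$\mathbb{E}\big\|\alpha_\theta\widetilde G(\theta)-\mathbb{E}[\alpha_\theta\widetilde G(\theta)]\big\|^2\le\big(A_q\|\theta-\theta^\star\|+B_q\big)^2+5(1-p)\tau_\theta^2.$$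
   Context: (A4) For all $\theta$, uncorrupted gradient samples satisfy $\widetilde G(\theta)=\nabla\mathcal{L}(\theta)+\varepsilon_\theta$, with $\mathbb{E}[\varepsilon_\theta\mid\theta]=0$ and $\varepsilon_\theta$ distributed as $\delta\nu_{\theta,1}+(1-\delta)\nu_{\theta,2}$, $\delta>0$, where $\nu_{\theta,1}$ has a Lebesgue density $h_\theta$ with $\inf_{\|\omega\|\le R}h_\theta(\omega)>\varkappa(R)>0$ for all $R>0$, $\varkappa$ independent of $\theta$. (A5) For all $\theta$: $\mathbb{E}[\|\varepsilon_\theta\|^q\mid\theta]^{1/q}\le A_q\|\theta-\theta^\star\|+B_q$ with $A_q,B_q>0$, where $\theta^\star\in\mathbb{R}^d$ is a fixed reference point (the minimizer of $\mathcal{L}$). $Q_p(X)$ denotes the $p$-quantile of a real random variable $X$. All expectations are conditional on the fixed $\theta$. *)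

From HB Require Import structures.
From mathcomp Require Import all_boot all_order all_algebra.
From mathcomp Require Import all_classical all_reals all_analysis.
Set Implicit Arguments. Unset Strict Implicit. Unset Printing Implicit Defensive.
Import Order.TTheory GRing.Theory Num.Theory.
Import numFieldNormedType.Exports.
Local Open Scope classical_set_scope.
Local Open Scope ring_scope.

Definition enorm {R : realType} {d : nat} (v : 'rV[R]_d) : R :=
  Num.sqrt (\sum_(i < d) v ord0 i ^+ 2).

(* Conversions between row vectors and tuples (tuples carry the product
   sigma-algebra in MathComp-Analysis). *)
Definition rv2tup {R : realType} {d : nat} (v : 'rV[R]_d) : d.-tuple R :=
  [tuple v ord0 i | i < d].
Definition tup2rv {R : realType} {d : nat} (t : d.-tuple R) : 'rV[R]_d :=
  \row_(i < d) tnth t i.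

(* Iterated Lebesgue integral over R^n (n.-tuples): the Lebesgue integral on
   R^n of a nonnegative measurable function, computed by Tonelli as iterated
   one-dimensional Lebesgue integrals. *)
Fixpoint lebI {R : realType} (n : nat) : (n.-tuple R -> \bar R) -> \bar R :=
  match n with
  | 0 => fun f => f [tuple]
  | n'.+1 => fun f =>
      (\int[@lebesgue_measure R]_x lebI (fun t : n'.-tuple R => f [tuple of x :: t]))%E
  end.

Definition grad {R : realType} {d : nat} (L : 'rV[R]_d -> R) (theta : 'rV[R]_d)
  : 'rV[R]_d := \row_(i < d) ('d L theta (delta_mx ord0 i : 'rV[R]_d)).

Definition vexpect {dT} {T : measurableType dT} {R : realType}
  (P : probability T R) {d : nat} (X : T -> 'rV[R]_d) : 'rV[R]_d :=
  \row_(i < d) fine (\int[P]_w (X w ord0 i)%:E)%E.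

Definition quantile {dT} {T : measurableType dT} {R : realType}
  (P : probability T R) (X : T -> R) (p : R) : R :=
  inf [set t : R | (p%:E <= P [set w | (X w <= t)%R])%E].

(* Clipping factor alpha = min(1, tau/||G||), with the convention alpha = 1
   when ||G|| <= tau (in particular when G = 0). *)
Definition clipfac {R : realType} (tau x : R) : R :=
  if x <= tau then 1 else tau / x.

From HB Require Import structures.
From mathcomp Require Import all_boot all_order all_algebra.
From mathcomp Require Import all_classical all_reals all_analysis.
From mathcomp Require Import measurable_realfun.
From mathcomp Require Import ring lra.
Import Order.TTheory GRing.Theory Num.Theory.
Import numFieldNormedType.Exports.
Local Open Scope classical_set_scope.
Local Open Scope ring_scope.

(* Clipping x |-> clipfac tau |x| *: x is the projection onto the ball of radius tau.
   Bias: the noise is centred, so E[alpha G] - E[alpha] grad = E[(alpha - 1) eps], and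
   alpha = 1 off B := {|G| > tau}, an event of probability at most 1 - p because the
   p-quantile is attained; Jensen and Hoelder then give
   |E[(alpha - 1) eps]| <= E[1_B |eps|] <= P(B)^(1 - 1/q) ||eps||_q.
   Threshold: |G| <= |grad| + |eps| pointwise shifts the quantile, and Markov's inequality
   for |eps|^q bounds the p-quantile of |eps|.
   Variance: the mean minimises the mean square deviation and the projection is
   1-Lipschitz, so E|X - E X|^2 <= E|clip G - clip grad|^2 <= E|eps|^2 <= ||eps||_q^2
   when q >= 2. *)

Section euclidean.
Context {R : realType} {d : nat}.
Implicit Types (u v : 'rV[R]_d) (a b t : R).

Definition dotv u v := \sum_(i < d) u ord0 i * v ord0 i.

Lemma enorm_ge0 v : 0 <= enorm v.
Proof. exact: sqrtr_ge0. Qed.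

Lemma dotvv_ge0 v : 0 <= dotv v v.
Proof. by apply: sumr_ge0 => i _; rewrite -expr2 sqr_ge0. Qed.

Lemma enormE v : enorm v = Num.sqrt (dotv v v).
Proof. by rewrite /enorm /dotv; under eq_bigr do rewrite expr2. Qed.

Lemma enorm_sqr v : enorm v ^+ 2 = dotv v v.
Proof. by rewrite enormE sqr_sqrtr // dotvv_ge0. Qed.

Lemma enorm_le v t : 0 <= t -> dotv v v <= t ^+ 2 -> enorm v <= t.
Proof. by move=> t0 vt; rewrite enormE -(ger0_norm t0) -sqrtr_sqr ler_wsqrtr. Qed.

Lemma sqr_enorm_lincomb a b u v :
  enorm (a *: u + b *: v) ^+ 2
  = a ^+ 2 * dotv u u + 2 * a * b * dotv u v + b ^+ 2 * dotv v v.
Proof.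
rewrite enorm_sqr /dotv !mulr_sumr -!big_split /=.
by apply: eq_bigr => i _; rewrite !mxE; ring.
Qed.

Lemma cauchy_schwarz u v : dotv u v <= enorm u * enorm v.
Proof.
have [u0|u0] := eqVneq (dotv u u) 0.
  have ui i : u ord0 i = 0.
    apply/eqP; rewrite -sqrf_eq0 expr2; apply/eqP.
    by apply: (psumr_eq0P _ u0) => // j _; rewrite -expr2 sqr_ge0.
  rewrite /dotv big1 => [|i _]; last by rewrite ui mul0r.
  by rewrite mulr_ge0 ?enorm_ge0.
have uu : 0 < dotv u u by rewrite lt0r u0 dotvv_ge0.
(* Expand |(u.v) u - (u.u) v|^2 >= 0. *)
have := sqr_ge0 (enorm (dotv u v *: u + (- dotv u u) *: v)).
rewrite sqr_enorm_lincomb => h.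
have {h} : 0 <= dotv u u * (dotv u u * dotv v v - dotv u v ^+ 2) by nra.
rewrite pmulr_rge0 // subr_ge0 -!enorm_sqr -exprMn => h.
rewrite (le_trans (ler_norm _)) // -(ger0_norm (mulr_ge0 (enorm_ge0 u) (enorm_ge0 v))).
by rewrite -!sqrtr_sqr ler_wsqrtr.
Qed.

Lemma enormZ a v : 0 <= a -> enorm (a *: v) = a * enorm v.
Proof.
move=> a0; rewrite /enorm.
under eq_bigr do rewrite mxE exprMn.
by rewrite -mulr_sumr sqrtrM ?sqr_ge0 // sqrtr_sqr ger0_norm.
Qed.

Lemma enormN v : enorm (- v) = enorm v.
Proof. by rewrite /enorm; under eq_bigr do rewrite mxE sqrrN. Qed.

Lemma ler_enormD u v : enorm (u + v) <= enorm u + enorm v.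
Proof.
apply: enorm_le; first by rewrite addr_ge0 ?enorm_ge0.
rewrite -enorm_sqr.
have := sqr_enorm_lincomb 1 1 u v; rewrite !scale1r => ->.
have := cauchy_schwarz u v; rewrite sqrrD -!enorm_sqr; lra.
Qed.

Lemma ler_coord_enorm v i : `|v ord0 i| <= enorm v.
Proof.
rewrite /enorm -sqrtr_sqr ler_wsqrtr // (bigD1 i) //= lerDl.
by apply: sumr_ge0 => j _; rewrite sqr_ge0.
Qed.

End euclidean.

Section clipping.
Context {R : realType}.
Implicit Types (t r s : R).

Lemma clipfac_ge0 t r : 0 <= t -> 0 <= r -> 0 <= clipfac t r.
Proof. by move=> t0 r0; rewrite /clipfac; case: ifP => // _; rewrite divr_ge0. Qed.

Lemma clipfac_le1 t r : 0 <= t -> clipfac t r <= 1.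
Proof.
move=> t0; rewrite /clipfac; case: ifPn => //; rewrite -ltNge => tr.
by rewrite ler_pdivrMr ?mul1r ?ltW // (le_lt_trans t0).
Qed.

Lemma clipfac_eq1 t r : r <= t -> clipfac t r = 1.
Proof. by rewrite /clipfac => ->. Qed.

Lemma clipfacM t r : 0 <= t -> clipfac t r * r = Num.min t r.
Proof.
move=> t0; rewrite /clipfac; case: ifPn => [rt|]; first by rewrite mul1r min_r.
by rewrite -ltNge => tr; rewrite divfK ?gt_eqF ?(le_lt_trans t0) // min_l // ltW.
Qed.

Lemma ler_dist_min t r s : `|Num.min t r - Num.min t s| <= `|r - s|.
Proof.
have := ler_norm (r - s); have := ler_norm (s - r); rewrite distrC => hsr hrs.
by rewrite /Num.min ler_norml; do 2 case: ltP => ?; apply/andP; split; lra.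
Qed.

Context {d : nat}.
Implicit Types x y : 'rV[R]_d.

Definition clip t x := clipfac t (enorm x) *: x.

Lemma enorm_clip t x : 0 <= t -> enorm (clip t x) = Num.min t (enorm x).
Proof. by move=> t0; rewrite enormZ ?clipfacM ?clipfac_ge0 ?enorm_ge0. Qed.

Lemma enorm_clip_le t x : 0 <= t -> enorm (clip t x) <= t.
Proof. by move=> t0; rewrite enorm_clip // ge_min lexx. Qed.

(* With a := clipfac t |x| and b := clipfac t |y|, Cauchy-Schwarz gives
   |x - y|^2 - |a x - b y|^2 >= (|x| - |y|)^2 - (a |x| - b |y|)^2, and a |x| = min t |x|. *)
Lemma enorm_clipB_le t x y : 0 <= t -> enorm (clip t x - clip t y) <= enorm (x - y).
Proof.
move=> t0; set a := clipfac t (enorm x); set b := clipfac t (enorm y).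
have a0 : 0 <= a by rewrite clipfac_ge0 ?enorm_ge0.
have b0 : 0 <= b by rewrite clipfac_ge0 ?enorm_ge0.
have ab1 : a * b <= 1 by rewrite mulr_ile1 ?clipfac_le1.
have := ler_dist_min t (enorm x) (enorm y).
rewrite -(clipfacM t (enorm x) t0) -(clipfacM t (enorm y) t0) -/a -/b.
rewrite -ler_sqr ?nnegrE ?normr_ge0 //.
rewrite !real_normK ?num_real // => hmin.
have := cauchy_schwarz x y => hcs.
apply: enorm_le; first exact: enorm_ge0.
rewrite -!enorm_sqr.
have := sqr_enorm_lincomb a (- b) x y; rewrite scaleNr => ->.
have := sqr_enorm_lincomb 1 (- 1) x y; rewrite scaleNr !scale1r => ->.
rewrite -!enorm_sqr; nra.
Qed.

End clipping.

Section probability_tools.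
Context {dT : measure_display} {T : measurableType dT} {R : realType}.
Variable P : probability T R.
Implicit Types (f h : T -> R) (A B : set T).

Lemma measurable_ler_set f c : measurable_fun setT f -> measurable [set w | f w <= c].
Proof.
move=> mf; have := mf measurableT _ (measurable_itv `]-oo, c]).
by rewrite setTI; congr measurable; apply/seteqP; split => w /=; rewrite in_itv.
Qed.

Lemma measurable_ltr_set f c : measurable_fun setT f -> measurable [set w | c < f w].
Proof.
move=> mf; have := mf measurableT _ (measurable_itv `]c, +oo[).
by rewrite setTI; congr measurable; apply/seteqP; split => w /=; rewrite in_itv /= andbT.
Qed.

Lemma probability_setC_le A p :
  measurable A -> (p%:E <= P A)%E -> (P (~` A) <= (1 - p)%:E)%E.
Proof.
move=> mA; rewrite probability_setC // -(fineK (fin_num_measure P _ mA)).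
by rewrite -EFinB !lee_fin => ?; lra.
Qed.

Lemma markov_set h B c : 0 <= c -> measurable B -> measurable_fun setT h ->
  (forall w, 0 <= h w) -> (forall w, B w -> c <= h w) ->
  (c%:E * P B <= \int[P]_w (h w)%:E)%E.
Proof.
move=> c0 mB mh h0 hB; rewrite -integral_cst //.
apply: (@le_trans _ _ (\int[P]_(w in B) (h w)%:E)%E).
  by apply: ge0_le_integral => //; apply/measurable_EFinP/(measurable_funS _ _ mh).
apply: ge0_subset_integral => //; first exact/measurable_EFinP.
by move=> w _; rewrite lee_fin.
Qed.

Lemma integrable_dominated f h : measurable_fun setT f -> (forall w, `|f w| <= `|h w|) ->
  P.-integrable setT (EFin \o h) -> P.-integrable setT (EFin \o f).
Proof.
move=> mf fh; apply: le_integrable => //; first exact/measurable_EFinP.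
by move=> w _; rewrite lee_fin.
Qed.

Lemma integrable_bounded f c : measurable_fun setT f -> (forall w, `|f w| <= c) ->
  P.-integrable setT (EFin \o f).
Proof.
move=> mf fc; apply: (integrable_dominated _ (fun=> c) mf) => [w|].
  exact: le_trans (fc w) (ler_norm c).
exact: finite_measure_integrable_cst.
Qed.

Lemma Rintegral_cst_probability c : Rintegral P setT (fun=> c) = c.
Proof. by rewrite Rintegral_cst // (_ : fine (P setT) = 1) ?mulr1 // probability_setT. Qed.

Lemma integrable_sumr {I : finType} (f : I -> T -> R) :
  (forall i, P.-integrable setT (EFin \o f i)) ->
  P.-integrable setT (EFin \o (fun w => \sum_i f i w)).
Proof.
move=> fi; apply: eq_integrable (integrable_sum measurableT _ (fun i _ => fi i)) => //.
by move=> w _; rewrite /= sumEFin.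
Qed.

Lemma Rintegral_sum {I : finType} (f : I -> T -> R) :
  (forall i, P.-integrable setT (EFin \o f i)) ->
  Rintegral P setT (fun w => \sum_i f i w) = \sum_i Rintegral P setT (f i).
Proof.
move=> fi; rewrite /Rintegral; under eq_integral do rewrite -sumEFin.
rewrite integral_sum // (eq_bigr (fun i => (Rintegral P setT (f i))%:E)) ?sumEFin //.
by move=> i _; rewrite fineK // (integrable_fin_num _ (fi i)).
Qed.

(* E (f - c)^2 = E (f - m)^2 + (m - c)^2 for the mean m. *)
Lemma Rintegral_sqr_center_le f c K : measurable_fun setT f -> (forall w, `|f w| <= K) ->
  Rintegral P setT (fun w => (f w - Rintegral P setT f) ^+ 2)
  <= Rintegral P setT (fun w => (f w - c) ^+ 2).
Proof.
move=> mf fK; set m := Rintegral P setT f.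
have ipowB a n : P.-integrable setT (EFin \o (fun w => (f w - a) ^+ n)).
  apply: (integrable_bounded _ ((K + `|a|) ^+ n)) => [|w].
    by apply: measurable_funX; apply: measurable_funB => //; exact: measurable_cst.
  rewrite normrX lerXn2r ?nnegrE ?addr_ge0 ?(le_trans _ (fK w)) //.
  by rewrite (le_trans (ler_normB _ _)) // lerD2r.
have iF : P.-integrable setT (EFin \o f).
  by apply: eq_integrable (ipowB 0 1) => // w _ /=; rewrite subr0.
have icst a : P.-integrable setT (EFin \o (fun=> a)) by exact: finite_measure_integrable_cst.
have center0 : Rintegral P setT (fun w => f w - m) = 0.
  by rewrite RintegralB // Rintegral_cst_probability subrr.
have -> : Rintegral P setT (fun w => (f w - c) ^+ 2)
    = Rintegral P setT (fun w => (f w - m) ^+ 2) + (m - c) ^+ 2.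
  rewrite (@eq_Rintegral _ _ _ P setT
      (fun w => (f w - m) ^+ 2 + (2 * (m - c) * (f w - m) + (m - c) ^+ 2)));
    last by move=> w _; ring.
  have ilin : P.-integrable setT (EFin \o (fun w => 2 * (m - c) * (f w - m))).
    exact: eq_integrable (integrableZl measurableT (2 * (m - c)) (ipowB m 1)).
  rewrite RintegralD //; last exact: eq_integrable (integrableD measurableT ilin (icst _)).
  rewrite RintegralD // RintegralZl //; last exact: ipowB m 1.
  by rewrite center0 mulr0 add0r Rintegral_cst_probability.
by rewrite lerDl sqr_ge0.
Qed.

End probability_tools.

Lemma poweRV_le {R : realType} (x : \bar R) (r s M : R) : 0 < r -> 0 <= s ->
  (0 <= x)%E -> 0 <= M -> (x `^ r^-1 <= M%:E)%E -> (x `^ (s / r) <= (M `^ s)%:E)%E.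
Proof.
move=> r0 s0 x0 M0 xM; rewrite mulrC poweRrM -poweR_EFin.
by apply: gt0_ler_poweR => //; rewrite in_itv /= leey andbT ?poweR_ge0 ?lee_fin.
Qed.

Section moments.
Context {dT : measure_display} {T : measurableType dT} {R : realType}.
Variable P : probability T R.

Lemma hoelder_indic (f : T -> R) B q : measurable_fun setT f ->
  (forall w, 0 <= f w) -> 1 < q -> measurable B ->
  (\int[P]_w (\1_B w * f w)%:E
   <= P B `^ (1 - q^-1) * (\int[P]_w (f w `^ q)%:E) `^ q^-1)%E.
Proof.
move=> mf f0 q1 mB; have q0 : 0 < q by lra.
have r0 : 0 < (1 - q^-1)^-1 by rewrite invr_gt0 subr_gt0 invf_lt1.
have := hoelder P (measurable_indic mB) mf r0 q0 (_ : _ = 1).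
rewrite invrK subrK => /(_ erefl); rewrite Lnorm1.
have -> : ('N[P]_q%:E[EFin \o f] = (\int[P]_w (f w `^ q)%:E) `^ q^-1)%E.
  by rewrite unlock; congr (_ `^ _)%E; apply: eq_integral => w _ /=; rewrite ger0_norm.
have -> : ('N[P]_((1 - q^-1)^-1)%:E[EFin \o \1_B] = P B `^ (1 - q^-1))%E.
  rewrite unlock invrK; congr (_ `^ _)%E.
  rewrite -[B in RHS]setIT -integral_indic //; apply: eq_integral => w _ /=.
  have rn0 : (1 - q^-1)^-1 != 0 by rewrite gt_eqF.
  by rewrite indicE; case: (w \in B); rewrite /= ?normr1 ?normr0 ?powR1 ?powR0.
suff -> : (\int[P]_w `|(EFin \o (\1_B \* f)%R) w| = \int[P]_w (\1_B w * f w)%:E)%E by [].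
by apply: eq_integral => w _ /=; rewrite ger0_norm // mulr_ge0 // indicE.
Qed.

Lemma second_moment_le (f : T -> R) q M : measurable_fun setT f -> (forall w, 0 <= f w) ->
  2 <= q -> 0 <= M -> ((\int[P]_w (f w `^ q)%:E) `^ q^-1 <= M%:E)%E ->
  (\int[P]_w (f w ^+ 2)%:E <= (M ^+ 2)%:E)%E.
Proof.
move=> mf f0 q2 M0 fM; have q0 : 0 < q by lra.
have I0 : (0 <= \int[P]_w (f w `^ q)%:E)%E.
  by apply: integral_ge0 => w _; rewrite lee_fin powR_ge0.
have f2q w : (f w ^+ 2) `^ (q / 2) = f w `^ q.
  by rewrite -powR_mulrn // -powRrM mulrC divfK.
rewrite -[M ^+ 2]powR_mulrn //; apply: le_trans _ (poweRV_le _ _ _ _ q0 (ler0n _ 2) I0 M0 fM).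
have [q2e|q2'] := eqVneq q 2.
  subst q; rewrite divff ?pnatr_eq0 // poweRe1 //.
  suff -> : (\int[P]_w (f w ^+ 2)%:E = \int[P]_w (f w `^ 2)%:E)%E by [].
  by apply: eq_integral => w _; rewrite powR_mulrn.
have q2s : 1 < q / 2 by rewrite ltr_pdivlMr // mul1r lt_neqAle eq_sym q2' q2.
have := hoelder_indic _ _ _ (measurable_funX 2 mf) (fun w => sqr_ge0 (f w)) q2s measurableT.
rewrite probability_setT poweR1r mul1e invf_div.
suff -> : (\int[P]_w (\1_setT w * f w ^+ 2)%:E = \int[P]_w (f w ^+ 2)%:E)%E.
  by under [X in (_ <= X `^ _)%E -> _]eq_integral do rewrite f2q.
by apply: eq_integral => w _; rewrite indicT mul1r.
Qed.

End moments.

Section quantile.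
Context {dT : measure_display} {T : measurableType dT} {R : realType}.
Variable P : probability T R.
Implicit Types (X Y : T -> R) (c p t : R).

Lemma cdf_ge_lbound0 X p : 0 < p -> (forall w, 0 <= X w) ->
  lbound [set t | (p%:E <= P [set w | (X w <= t)%R])%E] 0.
Proof.
move=> p0 X0 t /= pt; rewrite leNgt; apply/negP => t0; move: pt.
suff -> : [set w | X w <= t] = set0 by rewrite measure0 lee_fin leNgt p0.
by apply/seteqP; split => w //=; have := X0 w; lra.
Qed.

Lemma quantile_le X p t : 0 < p -> (forall w, 0 <= X w) ->
  (p%:E <= P [set w | (X w <= t)%R])%E -> quantile P X p <= t.
Proof. by move=> p0 X0; apply: ge_inf; exists 0; exact: cdf_ge_lbound0. Qed.

Lemma quantile_ge0 X p t : 0 < p -> (forall w, 0 <= X w) ->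
  (p%:E <= P [set w | (X w <= t)%R])%E -> 0 <= quantile P X p.
Proof. by move=> p0 X0 Xt; apply: lb_le_inf; [exists t | exact: cdf_ge_lbound0]. Qed.

(* The distribution function is right-continuous, so the infimum is attained. *)
Lemma cdf_quantile_ge X p t : measurable_fun setT X -> 0 < p -> (forall w, 0 <= X w) ->
  (p%:E <= P [set w | (X w <= t)%R])%E ->
  (p%:E <= P [set w | (X w <= quantile P X p)%R])%E.
Proof.
move=> mX p0 X0 Xt; set tau := quantile P X p.
pose F n := [set w | X w <= tau + n.+1%:R^-1].
have mF n : measurable (F n) by apply: measurable_ler_set.
have capF : \bigcap_n F n = [set w | X w <= tau].
  apply/seteqP; split => w /=; last first.
    by move=> h n _; rewrite /F /= (le_trans h) // lerDl invr_ge0.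
  move=> h; rewrite leNgt; apply/negP => /ltr_add_invr [k hk].
  by have := lt_le_trans hk (h k I); rewrite ltxx.
have ndF : {homo F : n m / (n <= m)%N >-> (m <= n)%O}.
  move=> n m nm; apply/subsetPset => w; rewrite /F /= => h.
  rewrite (le_trans h) // lerD2l.
  by rewrite lef_pV2 ?posrE // ler_nat ltnS.
have mcap : measurable (\bigcap_n F n) by rewrite capF; apply: measurable_ler_set.
have cvF := nonincreasing_cvg_mu (le_lt_trans (probability_le1 P (mF 0%N)) (ltry 1))
  mF mcap ndF.
rewrite -capF -(cvg_lim _ cvF) //.
apply: lime_ge; first by apply/cvg_ex; exists (P (\bigcap_n F n)).
apply: nearW => n; have [s ps slt] : exists2 s,
    (p%:E <= P [set w | (X w <= s)%R])%E & s < tau + n.+1%:R^-1.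
  by apply: inf_lt; [exists t | rewrite ltrDl invr_gt0].
rewrite (le_trans ps) // le_measure ?inE //; first exact: measurable_ler_set.
by move=> w /= h; rewrite /F /= (le_trans h) // ltW.
Qed.

Lemma quantile_tail_le X p t : measurable_fun setT X -> 0 < p -> (forall w, 0 <= X w) ->
  (p%:E <= P [set w | (X w <= t)%R])%E ->
  (P [set w | (quantile P X p < X w)%R] <= (1 - p)%:E)%E.
Proof.
move=> mX p0 X0 Xt; set A := [set w | X w <= quantile P X p].
have -> : [set w | quantile P X p < X w] = ~` A.
  by apply/seteqP; split => w /=; rewrite ltNge => /negP.
exact: probability_setC_le (measurable_ler_set _ _ mX) (cdf_quantile_ge _ _ _ mX p0 X0 Xt).
Qed.

Lemma quantile_le_shift X Y c p t : measurable_fun setT X -> measurable_fun setT Y ->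
  0 < p -> (forall w, 0 <= X w) -> (forall w, X w <= c + Y w) ->
  (p%:E <= P [set w | (Y w <= t)%R])%E -> quantile P X p <= c + quantile P Y p.
Proof.
move=> mX mY p0 X0 XY Yt; rewrite -lerBlDl; apply: lb_le_inf; first by exists t.
move=> s /= Ys; rewrite lerBlDl; apply: quantile_le => //.
apply: le_trans Ys _; rewrite le_measure ?inE //; try exact: measurable_ler_set.
by move=> w /= Yws; rewrite (le_trans (XY w)) // lerD2l.
Qed.

Lemma cdf_ge_moment X q p M : measurable_fun setT X -> (forall w, 0 <= X w) ->
  0 < q -> 0 < p < 1 -> 0 < M ->
  ((\int[P]_w (X w `^ q)%:E) `^ q^-1 <= M%:E)%E ->
  (p%:E <= P [set w | (X w <= (1 - p) `^ (- q^-1) * M)%R])%E.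
Proof.
move=> mX X0 q0 /andP[p0 p1] M0 XM; set t := (1 - p) `^ (- q^-1) * M.
have p1' : 0 < 1 - p by rewrite subr_gt0.
have t0 : 0 < t by rewrite mulr_gt0 ?powR_gt0.
have I0 : (0 <= \int[P]_w (X w `^ q)%:E)%E.
  by apply: integral_ge0 => w _; rewrite lee_fin powR_ge0.
have tq : t `^ q = (1 - p)^-1 * M `^ q.
  by rewrite powRM ?powR_ge0 ?ltW // -powRrM mulNr mulVf ?gt_eqF // powR_inv1 ?ltW.
set B := [set w | t < X w]; have mB : measurable B by apply: measurable_ltr_set.
have Bq w : B w -> t `^ q <= X w `^ q.
  by move=> /ltW tX; apply: ge0_ler_powR; rewrite ?nnegrE ?(ltW q0) ?(ltW t0).
have IM := poweRV_le _ _ _ _ q0 (ltW q0) I0 (ltW M0) XM.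
rewrite divff ?gt_eqF // poweRe1 // in IM.
have := le_trans (markov_set P _ _ _ (powR_ge0 _ _) mB
  (measurableT_comp (measurable_powR q) mX) (fun w => powR_ge0 _ _) Bq) IM.
rewrite -(fineK (fin_num_measure P _ mB)) -EFinM lee_fin tq => hB.
have PB : fine (P B) <= 1 - p.
  have Mq : 0 < M `^ q by apply: powR_gt0.
  by rewrite mulrAC -[leRHS]mul1r ler_pM2r // mulrC ler_pdivrMr // mul1r in hB.
have -> : [set w | X w <= t] = ~` B by apply/seteqP; split => w /=; rewrite leNgt => /negP.
by rewrite probability_setC // -(fineK (fin_num_measure P _ mB)) -EFinB lee_fin; lra.
Qed.

End quantile.

Section random_vectors.
Context {dT : measure_display} {T : measurableType dT} {R : realType}.
Variable P : probability T R.
Context {d : nat}.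
Implicit Types (X Y : T -> 'rV[R]_d) (a : 'rV[R]_d).

Lemma measurable_enorm X : (forall i, measurable_fun setT (fun w => X w ord0 i)) ->
  measurable_fun setT (fun w => enorm (X w)).
Proof.
move=> mX; apply: (measurableT_comp (continuous_measurable_fun (@sqrt_continuous R))).
by apply: measurable_sum => i; exact: measurable_funX.
Qed.

Lemma measurable_coordB X a : (forall i, measurable_fun setT (fun w => X w ord0 i)) ->
  forall i, measurable_fun setT (fun w => (X w - a) ord0 i).
Proof.
move=> mX i; under eq_fun do rewrite !mxE.
by apply: measurable_funB => //; exact: measurable_cst.
Qed.

Lemma vexpectE X i : vexpect P X ord0 i = Rintegral P setT (fun w => X w ord0 i).
Proof. by rewrite mxE. Qed.

(* |E Y|^2 = E <E Y, Y> <= |E Y| E Z by Cauchy-Schwarz. *)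
Lemma enorm_vexpect_le Y (Z : T -> R) :
  (forall i, P.-integrable setT (EFin \o (fun w => Y w ord0 i))) ->
  P.-integrable setT (EFin \o Z) -> (forall w, enorm (Y w) <= Z w) ->
  enorm (vexpect P Y) <= Rintegral P setT Z.
Proof.
move=> iY iZ YZ; set m := vexpect P Y.
have iYm i : P.-integrable setT (EFin \o (fun w => m ord0 i * Y w ord0 i)).
  by apply: eq_integrable (integrableZl measurableT (m ord0 i) (iY i)).
have sq : enorm m ^+ 2 <= enorm m * Rintegral P setT Z.
  rewrite enorm_sqr /dotv.
  under eq_bigr => i _ do rewrite [X in _ * X]vexpectE -RintegralZl //.
  rewrite -Rintegral_sum // -RintegralZl //; apply: le_Rintegral => //.
  - exact: integrable_sumr.
  - by apply: eq_integrable (integrableZl measurableT (enorm m) iZ).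
  move=> w _; apply: le_trans (cauchy_schwarz m (Y w)) _.
  by rewrite ler_wpM2l ?enorm_ge0.
have [->|m0] := eqVneq (enorm m) 0.
  by apply: Rintegral_ge0 => w _; exact: le_trans (enorm_ge0 _) (YZ w).
by move: sq; rewrite expr2 ler_pM2l // lt0r m0 enorm_ge0.
Qed.

Lemma integral_sqr_enormB X a K : (forall i, measurable_fun setT (fun w => X w ord0 i)) ->
  (forall w, enorm (X w) <= K) ->
  (\int[P]_w (enorm (X w - a) ^+ 2)%:E
   = (\sum_(i < d) Rintegral P setT (fun w => (X w ord0 i - a ord0 i) ^+ 2))%:E)%E.
Proof.
move=> mX XK.
have iXa i : P.-integrable setT (EFin \o (fun w => (X w ord0 i - a ord0 i) ^+ 2)).
  apply: (integrable_bounded P _ ((K + `|a ord0 i|) ^+ 2)) => [|w].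
    by apply: measurable_funX; apply: measurable_funB => //; exact: measurable_cst.
  have K0 : 0 <= K := le_trans (enorm_ge0 _) (XK w).
  rewrite normrX lerXn2r ?nnegrE ?addr_ge0 //.
  by rewrite (le_trans (ler_normB _ _)) // lerD2r (le_trans (ler_coord_enorm _ i)).
rewrite -(Rintegral_sum P (fun i w => (X w ord0 i - a ord0 i) ^+ 2)) //.
rewrite /Rintegral fineK; last exact: (integrable_fin_num measurableT (integrable_sumr P _ iXa)).
apply: eq_integral => w _; rewrite enorm_sqr /dotv; congr EFin.
by apply: eq_bigr => i _; rewrite !mxE expr2.
Qed.

Lemma integral_sqr_enorm_center_le X c K :
  (forall i, measurable_fun setT (fun w => X w ord0 i)) -> (forall w, enorm (X w) <= K) ->
  (\int[P]_w (enorm (X w - vexpect P X) ^+ 2)%:E <= \int[P]_w (enorm (X w - c) ^+ 2)%:E)%E.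
Proof.
move=> mX XK; rewrite !(integral_sqr_enormB _ _ _ mX XK) lee_fin; apply: ler_sum => i _.
rewrite vexpectE; apply: (Rintegral_sqr_center_le P _ _ K) => // w.
exact: le_trans (ler_coord_enorm _ i) (XK w).
Qed.

Lemma measurable_clipfac t (f : T -> R) : measurable_fun setT f -> (forall w, 0 <= f w) ->
  measurable_fun setT (fun w => clipfac t (f w)).
Proof.
move=> mf f0; rewrite (_ : (fun w => _) = fun w => if f w <= t then 1 else t * f w `^ (-1)).
  apply: measurable_fun_ifT; first by apply: measurable_fun_ler => //; exact: measurable_cst.
    exact: measurable_cst.
  apply: measurable_funM; first exact: measurable_cst.
  exact: measurableT_comp (measurable_powR _) mf.
by apply/funext => w; rewrite /clipfac powR_inv1.
Qed.

End random_vectors.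

Section clipped_gradient.
Context {dT : measure_display} {T : measurableType dT} {R : realType}.
Variable P : probability T R.
Context {d : nat}.
Variables (g : 'rV[R]_d) (eps : T -> 'rV[R]_d) (q p M : R).
Hypothesis meps : forall i, measurable_fun setT (fun w => eps w ord0 i).
Hypothesis q1 : 1 < q.
Hypothesis p01 : 0 < p < 1.
Hypothesis M0 : 0 < M.
Hypothesis eps_moment : ((\int[P]_w (enorm (eps w) `^ q)%:E) `^ q^-1 <= M%:E)%E.

Local Notation tau := (quantile P (fun w => enorm (g + eps w)) p).

Let p0 : 0 < p. Proof. by case/andP: p01. Qed.

Let mG i : measurable_fun setT (fun w => (g + eps w) ord0 i).
Proof.
under eq_fun do rewrite mxE.
by apply: measurable_funD => //; exact: measurable_cst.
Qed.

Let mnG : measurable_fun setT (fun w => enorm (g + eps w)).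
Proof. exact: measurable_enorm. Qed.

Let mneps : measurable_fun setT (fun w => enorm (eps w)).
Proof. exact: measurable_enorm. Qed.

Let cdf_eps : (p%:E <= P [set w | (enorm (eps w) <= (1 - p) `^ (- q^-1) * M)%R])%E.
Proof. by apply: cdf_ge_moment => // [w|]; [exact: enorm_ge0 | exact: lt_trans ltr01 q1]. Qed.

Let cdf_G :
  (p%:E <= P [set w | (enorm (g + eps w) <= enorm g + (1 - p) `^ (- q^-1) * M)%R])%E.
Proof.
apply: le_trans cdf_eps _; rewrite le_measure ?inE //; try exact: measurable_ler_set.
by move=> w /= h; rewrite (le_trans (ler_enormD _ _)) // lerD2l.
Qed.

Lemma quantile_enorm_noise_le :
  quantile P (fun w => enorm (eps w)) p <= (1 - p) `^ (- q^-1) * M.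
Proof. by apply: quantile_le cdf_eps => // w; exact: enorm_ge0. Qed.

Lemma clip_threshold_le : tau <= enorm g + quantile P (fun w => enorm (eps w)) p.
Proof.
apply: quantile_le_shift cdf_eps => // w; first exact: enorm_ge0.
exact: ler_enormD.
Qed.

Lemma clip_threshold_ge0 : 0 <= tau.
Proof. by apply: quantile_ge0 cdf_G => // w; exact: enorm_ge0. Qed.

Lemma clipped_variance_le : 2 <= q ->
  (\int[P]_w (enorm (clip tau (g + eps w) - vexpect P (fun w => clip tau (g + eps w))) ^+ 2)%:E
   <= (M ^+ 2)%:E)%E.
Proof.
move=> q2; have tau0 := clip_threshold_ge0.
have mX i : measurable_fun setT (fun w => clip tau (g + eps w) ord0 i).
  under eq_fun do rewrite mxE.
  by apply: measurable_funM => //; apply: measurable_clipfac => // w; exact: enorm_ge0.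
apply: le_trans
  (integral_sqr_enorm_center_le P _ (clip tau g) tau mX (fun w => enorm_clip_le _ _ tau0)) _.
apply: le_trans
  (second_moment_le P _ _ _ mneps (fun w => enorm_ge0 _) q2 (ltW M0) eps_moment).
apply: ge0_le_integral => //.
- by move=> *; rewrite lee_fin sqr_ge0.
- by apply/measurable_EFinP/measurable_funX/measurable_enorm; exact: measurable_coordB.
- by apply/measurable_EFinP/measurable_funX.
move=> w _; rewrite lee_fin lerXn2r ?nnegrE ?enorm_ge0 //.
by apply: le_trans (enorm_clipB_le _ _ _ tau0) _; rewrite (addrC g) addrK.
Qed.

Local Notation alpha w := (clipfac tau (enorm (g + eps w))).

Let alpha_ge0 w : 0 <= alpha w.
Proof. by rewrite clipfac_ge0 ?enorm_ge0 ?clip_threshold_ge0. Qed.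

Let alpha_le1 w : alpha w <= 1.
Proof. by rewrite clipfac_le1 ?clip_threshold_ge0. Qed.

Let malpha : measurable_fun setT (fun w => alpha w).
Proof. by apply: measurable_clipfac => // w; exact: enorm_ge0. Qed.

Let ialpha : P.-integrable setT (EFin \o (fun w => alpha w)).
Proof. by apply: (integrable_bounded P _ 1) => // w; rewrite ger0_norm. Qed.

Lemma tail_integral_le B : measurable B -> (P B <= (1 - p)%:E)%E ->
  (\int[P]_w (\1_B w * enorm (eps w))%:E <= ((1 - p) `^ (1 - q^-1) * M)%:E)%E.
Proof.
move=> mB PB; apply: le_trans (hoelder_indic P _ _ _ mneps (fun w => enorm_ge0 _) q1 mB) _.
rewrite EFinM lee_pmul ?poweR_ge0 // -(fineK (fin_num_measure P _ mB)) poweR_EFin lee_fin.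
have PB' : fine (P B) <= 1 - p by rewrite -lee_fin fineK ?fin_num_measure.
have qi : 0 <= 1 - q^-1 by rewrite subr_ge0 invf_le1 ?ltW // (lt_trans ltr01 q1).
by rewrite ge0_ler_powR ?nnegrE ?fine_ge0 ?measure_ge0 // (le_trans _ PB') ?fine_ge0 ?measure_ge0.
Qed.

Hypothesis ieps : forall i, P.-integrable setT (EFin \o (fun w => eps w ord0 i)).
Hypothesis eps_mean0 : forall i, (\int[P]_w (eps w ord0 i)%:E = 0)%E.

Let ialpha_eps i : P.-integrable setT (EFin \o (fun w => (alpha w - 1) * eps w ord0 i)).
Proof.
apply: (integrable_dominated P _ _ _ _ (ieps i)) => [|w].
  by apply: measurable_funM => //; apply: measurable_funB => //; exact: measurable_cst.
have := alpha_ge0 w; have := alpha_le1 w => ? ?.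
by rewrite normrM ler_piMl // ler_norml; apply/andP; split; lra.
Qed.

(* Since the noise is centred, the bias only comes from the clipped samples. *)
Lemma clipped_mean_bias_eq :
  vexpect P (fun w => clip tau (g + eps w)) - fine (\int[P]_w (alpha w)%:E) *: g
  = vexpect P (fun w => (alpha w - 1) *: eps w).
Proof.
apply/rowP => i; rewrite [LHS]mxE !vexpectE !mxE.
have ialpha_g : P.-integrable setT (EFin \o (fun w => alpha w * g ord0 i)).
  exact: eq_integrable (integrableZr measurableT (g ord0 i) ialpha).
have Eeps : Rintegral P setT (fun w => eps w ord0 i) = 0 by rewrite /Rintegral eps_mean0.
rewrite (@eq_Rintegral _ _ _ P setT
  (fun w => alpha w * g ord0 i + ((alpha w - 1) * eps w ord0 i + eps w ord0 i))); last first.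
  by move=> w _; rewrite /clip !mxE; ring.
rewrite [RHS](@eq_Rintegral _ _ _ P setT (fun w => (alpha w - 1) * eps w ord0 i)); last first.
  by move=> w _; rewrite mxE.
rewrite RintegralD //; last first.
  by apply: eq_integrable (integrableD measurableT (ialpha_eps i) (ieps i)).
by rewrite RintegralD // RintegralZr // Eeps addr0 addrAC subrr add0r.
Qed.

Lemma clipped_mean_bias_le :
  enorm (vexpect P (fun w => clip tau (g + eps w)) - fine (\int[P]_w (alpha w)%:E) *: g)
  <= (1 - p) `^ (1 - q^-1) * M.
Proof.
rewrite clipped_mean_bias_eq.
set B := [set w | tau < enorm (g + eps w)].
have mB : measurable B by exact: measurable_ltr_set.
have PB : (P B <= (1 - p)%:E)%E.
  by apply: (quantile_tail_le P _ _ _ mnG p0 _ cdf_G) => w; exact: enorm_ge0.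
have tailB := tail_integral_le _ mB PB.
set Z := fun w => \1_B w * enorm (eps w).
have iZ : P.-integrable setT (EFin \o Z).
  apply/integrableP; split.
    by apply/measurable_EFinP/measurable_funM => //; exact: measurable_indic.
  under eq_integral do rewrite /= ger0_norm ?mulr_ge0 ?enorm_ge0 //.
  exact: le_lt_trans tailB (ltry _).
apply: le_trans (enorm_vexpect_le P _ Z _ iZ _) _.
- by move=> i; apply: eq_integrable (ialpha_eps i) => // w _ /=; rewrite mxE.
- move=> w; rewrite -opprB scaleNr enormN enormZ ?subr_ge0 // /Z indicE.
  have [Bw|nBw] := boolP (w \in B).
    by rewrite mul1r ler_piMl ?enorm_ge0 // lerBlDr lerDl.
  rewrite clipfac_eq1 ?subrr ?mul0r // leNgt; apply/negP => Bw.
  by move/negP: nBw; apply; exact: mem_set.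
by rewrite -lee_fin /Rintegral fineK // (integrable_fin_num measurableT iZ).
Qed.

End clipped_gradient.

Theorem lemma2 (R : realType) (d : nat) (L : 'rV[R]_d -> R)
  (theta thetastar : 'rV[R]_d)
  (dT : measure_display) (T : measurableType dT) (P : probability T R)
  (eps : T -> 'rV[R]_d) (q p Aq Bq : R) :
  (* L differentiable, thetastar its minimizer *)
  (forall x, differentiable L x) ->
  (forall x, L thetastar <= L x) ->
  1 < q -> 0 < p < 1 -> 0 < Aq -> 0 < Bq ->
  (* eps is a random vector *)
  (forall i, measurable_fun setT (fun w => eps w ord0 i)) ->
  (* (A4): zero mean *)
  (forall i, P.-integrable setT (fun w => (eps w ord0 i)%:E) /\
             (\int[P]_w (eps w ord0 i)%:E = 0)%E) ->
  (* (A4): law of eps is delta*nu1 + (1-delta)*nu2, nu1 with Lebesgue density h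
     bounded below on every ball *)
  (exists (delta : R) (h : 'rV[R]_d -> R)
          (nu2 : probability (d.-tuple R) R),
     [/\ 0 < delta <= 1,
         (forall x, 0 <= h x) /\
         measurable_fun setT (fun t : d.-tuple R => h (tup2rv t)),
         (lebI (fun t : d.-tuple R => (h (tup2rv t))%:E) = 1)%E,
         (forall Rad : R, 0 < Rad -> exists kappa : R, 0 < kappa /\
             forall w : 'rV[R]_d, enorm w <= Rad -> kappa < h w) &
         (forall A : set (d.-tuple R), measurable A ->
            P [set w | A (rv2tup (eps w))] =
            (delta%:E * lebI (fun t => (\1_A t * h (tup2rv t))%:E)
             + (1 - delta)%:E * nu2 A)%E)]) ->
  (* (A5) *)
  ((\int[P]_w ((enorm (eps w)) `^ q)%:E) `^ q^-1
     <= (Aq * enorm (theta - thetastar) + Bq)%:E)%E ->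
  let g := grad L theta in
  let G := fun w => g + eps w in
  let tau := quantile P (fun w => enorm (G w)) p in
  let alpha := fun w => clipfac tau (enorm (G w)) in
  let alphabar := fine (\int[P]_w (alpha w)%:E)%E in
  let M := Aq * enorm (theta - thetastar) + Bq in
  [/\ enorm (vexpect P (fun w => alpha w *: G w) - alphabar *: g)
        <= (1 - p) `^ (1 - q^-1) * M,
      tau <= enorm g + quantile P (fun w => enorm (eps w)) p,
      enorm g + quantile P (fun w => enorm (eps w)) p
        <= enorm g + (1 - p) `^ (- q^-1) * M &
      (2 <= q ->
       (\int[P]_w ((enorm (alpha w *: G w
                       - vexpect P (fun w => alpha w *: G w))) ^+ 2)%:E
          <= (M ^+ 2 + 5 * (1 - p) * tau ^+ 2)%:E)%E)].
Proof.
move=> _ _ q1 p01 Aq0 Bq0 meps eps_mean _ moment g G tau alpha alphabar M.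
have M0 : 0 < M by rewrite /M ltr_wpDl // mulr_ge0 ?enorm_ge0 // ltW.
have ieps i := (eps_mean i).1; have eps_mean0 i := (eps_mean i).2.
split.
- exact: clipped_mean_bias_le.
- exact: clip_threshold_le meps q1 p01 M0 moment.
- by rewrite lerD2l; exact: quantile_enorm_noise_le.
- move=> q2; apply: le_trans (clipped_variance_le P g _ _ _ _ meps q1 p01 M0 moment q2) _.
  have p1 : 0 <= 1 - p by case/andP: p01 => _ ?; lra.
  by rewrite lee_fin lerDl mulr_ge0 ?sqr_ge0 ?mulr_ge0.
Qed.
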